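(* Under the hypotheses of the sequential gradient descent setting (see context), for every $k\in\mathbb{N}$, $$J_{k+1}(x_{k+1})\le J_k(x_{k+1})\le J_k(x_k);$$ in particular the sequence $\{J_k(x_k)\}_k$ is nonincreasing.
   Context: $Q\in\mathbb{R}^{n\times n}$ symmetric positive semidefinite, $q\in\mathbb{R}^n$, $A\in\mathbb{R}^{n\times n}$ symmetric positive definite, $v\in\mathbb{R}^n$. $f(x)=\tfrac12 x^\top Qx+q^\top x$, $g(x)=(x-v)^\top A(x-v)$, $\mathcal{C}=\{x:g(x)\le1\}$, $\partial\mathcal{C}=\{x:g(x)=1\}$, $J_k(x)=f(x)+\frac{m}{k}g(x)^k$, $L_k=\bar\sigma(Q+m(4k-2)A)$, $r=\sqrt{\underline\sigma(A)}/\bar\sigma(A)$ ($\bar\sigma,\underline\sigma$ largest/smallest singular value). Setting: $m>0$ satisfies Requirement 2, namely with $w(x)=\nabla f(x)+m\nabla g(x)$, $\|w(x)\|^2\|\nabla g(x)\|\le 2rL_1\langle w(x),\nabla g(x)\rangle$ for all $x\in\partial\mathcal{C}$; $x_1\in\mathcal{C}$; $x_{k+1}=x_k-\gamma_k\nabla J_k(x_k)$ with $0<\gamma_k\le1/L_k$, $\sum_k\gamma_k^2<\infty$, $\sum_k\gamma_k=\infty$. *)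

From HB Require Import structures.
From mathcomp Require Import all_boot all_order all_algebra.
From mathcomp Require Import all_classical all_reals all_analysis.
Set Implicit Arguments. Unset Strict Implicit. Unset Printing Implicit Defensive.
Import Order.TTheory GRing.Theory Num.Theory.
Local Open Scope classical_set_scope.
Local Open Scope ring_scope.

Section Defs.
Variables (R : realType) (n : nat).

Definition dotv (u w : 'cV[R]_n) : R := \sum_(i < n) u i 0 * w i 0.
Definition norm2 (u : 'cV[R]_n) : R := Num.sqrt (dotv u u).

Definition qform (M : 'M[R]_n) (x : 'cV[R]_n) : R := (x^T *m M *m x) 0 0.

Definition symmetric (M : 'M[R]_n) : Prop := M^T = M.
Definition psd (M : 'M[R]_n) : Prop := symmetric M /\ forall x, 0 <= qform M x.
Definition pd (M : 'M[R]_n) : Prop := symmetric M /\ forall x, x != 0 -> 0 < qform M x.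

Definition sigma_max (M : 'M[R]_n) : R :=
  sup [set norm2 (M *m u) | u in [set u | norm2 u = 1]].
Definition sigma_min (M : 'M[R]_n) : R :=
  inf [set norm2 (M *m u) | u in [set u | norm2 u = 1]].

Definition grad (F : 'cV[R]_n -> R) (x : 'cV[R]_n) : 'cV[R]_n :=
  \col_i derive1 (fun t : R => F (x + t *: delta_mx i 0)) 0.

End Defs.

Section Problem.
Variables (R : realType) (n : nat).
Variables (Q A : 'M[R]_n) (q v : 'cV[R]_n) (m : R).

Definition fobj (x : 'cV[R]_n) : R := 1/2 * qform Q x + dotv q x.
Definition gcon (x : 'cV[R]_n) : R := qform A (x - v).
Definition Jk (k : nat) (x : 'cV[R]_n) : R := fobj x + m / k%:R * gcon x ^+ k.
Definition Lk (k : nat) : R := sigma_max (Q + (m * (4 * k%:R - 2)) *: A).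
Definition rA : R := Num.sqrt (sigma_min A) / sigma_max A.
Definition wfun (x : 'cV[R]_n) : 'cV[R]_n := grad fobj x + m *: grad gcon x.

Definition requirement2 : Prop :=
  forall x, gcon x = 1 ->
    norm2 (wfun x) ^+ 2 * norm2 (grad gcon x)
      <= 2 * rA * Lk 1 * dotv (wfun x) (grad gcon x).
End Problem.

From Pilot Require Import Defs.
From HB Require Import structures.
From mathcomp Require Import all_boot all_order all_algebra.
From mathcomp Require Import all_classical all_reals all_analysis.
From mathcomp Require Import ring lra.
Import Order.TTheory GRing.Theory Num.Theory.
Local Open Scope classical_set_scope.
Local Open Scope ring_scope.
Set Implicit Arguments. Unset Strict Implicit. Unset Printing Implicit Defensive.

(* On C the penalty g^k is at most 1, so J_(k+1) <= J_k there, and it suffices to show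
   that every iterate stays in C and that one gradient step decreases J_k.

   For k = 1 the step is an affine map; with the step size bounded by
   1/L_1, Requirement 2 makes it send the boundary of the ellipsoid C into C, hence,
   by convexity and affinity, all of C into C.  For k > 1 the step from x coincides with the k = 1 step from
   x + dl, where dl solves a linear system whose matrix dominates a positive multiple
   of A; the resulting bound on the A-norm of dl keeps x + dl in C.

   J_k is not L_k-smooth globally, but along a step between two points of C
   the second-order Taylor bound for u |-> u^k on [0, 1] controls the penalty increment
   by the Hessian bound Q + m (4k - 2) A, which the step size 1/L_k absorbs. *)

Section BilinearForm.
Variables (R : realType) (n : nat).
Implicit Types (M N : 'M[R]_n) (x y z : 'cV[R]_n).

Definition bil M x y : R := (x^T *m M *m y) 0 0.

Lemma qformE M x : qform M x = bil M x x. Proof. by []. Qed.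

Lemma dotvE x y : dotv x y = bil 1 x y.
Proof. rewrite /bil mulmx1 /dotv !mxE; apply: eq_bigr => i _; by rewrite !mxE. Qed.

Lemma bilDl M x y z : bil M (x + y) z = bil M x z + bil M y z.
Proof. by rewrite /bil linearD /= !mulmxDl mxE. Qed.
Lemma bilDr M x y z : bil M z (x + y) = bil M z x + bil M z y.
Proof. by rewrite /bil !mulmxDr mxE. Qed.
Lemma bilZl M a x y : bil M (a *: x) y = a * bil M x y.
Proof. by rewrite /bil linearZ /= -!scalemxAl mxE. Qed.
Lemma bilZr M a x y : bil M x (a *: y) = a * bil M x y.
Proof. by rewrite /bil -!scalemxAr mxE. Qed.
Lemma bilNl M x y : bil M (- x) y = - bil M x y.
Proof. by rewrite -scaleN1r bilZl mulN1r. Qed.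
Lemma bilNr M x y : bil M x (- y) = - bil M x y.
Proof. by rewrite -scaleN1r bilZr mulN1r. Qed.
Lemma bilBl M x y z : bil M (x - y) z = bil M x z - bil M y z.
Proof. by rewrite bilDl bilNl. Qed.
Lemma bilBr M x y z : bil M z (x - y) = bil M z x - bil M z y.
Proof. by rewrite bilDr bilNr. Qed.
Lemma bil0l M y : bil M 0 y = 0.
Proof. by rewrite -(scale0r 0) bilZl mul0r. Qed.
Lemma bil0r M x : bil M x 0 = 0.
Proof. by rewrite -(scale0r 0) bilZr mul0r. Qed.
Lemma bilMD M N x y : bil (M + N) x y = bil M x y + bil N x y.
Proof. by rewrite /bil mulmxDr mulmxDl mxE. Qed.
Lemma bilMZ a M x y : bil (a *: M) x y = a * bil M x y.
Proof. by rewrite /bil -scalemxAr -scalemxAl mxE. Qed.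
Lemma bilMN M x y : bil (- M) x y = - bil M x y.
Proof. by rewrite -scaleN1r bilMZ mulN1r. Qed.

Lemma bilC M x y : Defs.symmetric M -> bil M x y = bil M y x.
Proof.
move=> sM; rewrite /bil.
have -> : (x^T *m M *m y) 0 0 = ((x^T *m M *m y)^T) 0 0 by rewrite [RHS]mxE.
by rewrite !trmx_mul trmxK sM mulmxA.
Qed.

Lemma bil_dotv M x y : bil M x y = dotv x (M *m y).
Proof. by rewrite dotvE /bil mulmx1 mulmxA. Qed.

Lemma bil_dotvl M x y : Defs.symmetric M -> bil M x y = dotv (M *m x) y.
Proof. by move=> sM; rewrite dotvE /bil mulmx1 trmx_mul sM. Qed.

Lemma symmetric1 : Defs.symmetric (1 : 'M[R]_n). Proof. exact: trmx1. Qed.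

Lemma dotvC x y : dotv x y = dotv y x.
Proof. by rewrite !dotvE bilC //; exact: symmetric1. Qed.
Lemma dotvDl x y z : dotv (x + y) z = dotv x z + dotv y z.
Proof. by rewrite !dotvE bilDl. Qed.
Lemma dotvZl a x z : dotv (a *: x) z = a * dotv x z.
Proof. by rewrite !dotvE bilZl. Qed.
Lemma dotvZr a x z : dotv z (a *: x) = a * dotv z x.
Proof. by rewrite !dotvE bilZr. Qed.
Lemma dotv0l z : dotv 0 z = 0.
Proof. by rewrite dotvE bil0l. Qed.

Lemma dotv_ge0 x : 0 <= dotv x x.
Proof. by apply: sumr_ge0 => i _; rewrite -expr2 sqr_ge0. Qed.

Lemma norm2_ge0 x : 0 <= norm2 x. Proof. exact: sqrtr_ge0. Qed.
Lemma norm2_sqr x : norm2 x ^+ 2 = dotv x x.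
Proof. by rewrite sqr_sqrtr // dotv_ge0. Qed.

Lemma discriminant_le (a b c : R) : 0 <= c ->
  (forall t, 0 <= a + 2 * t * b + t ^+ 2 * c) -> b ^+ 2 <= a * c.
Proof.
move=> c0 H.
have a0 : 0 <= a by have := H 0; rewrite mulr0 !mul0r expr0n /= mul0r !addr0.
have [ec|cn0] := eqVneq c 0.
  rewrite ec in H *.
  have [->|bn0] := eqVneq b 0; first by rewrite expr0n /= mulr0.
  have := H (- (a + 1) / (2 * b)).
  have -> : a + 2 * (- (a + 1) / (2 * b)) * b + (- (a + 1) / (2 * b)) ^+ 2 * 0 = -1.
    by field.
  lra.
have cp : 0 < c by rewrite lt_neqAle eq_sym cn0.
have := H (- b / c).
have -> : a + 2 * (- b / c) * b + (- b / c) ^+ 2 * c = (a * c - b ^+ 2) / c.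
  by field; rewrite cn0.
by rewrite pmulr_lge0 ?invr_gt0 // subr_ge0.
Qed.

Section SemiDefinite.
Variable M : 'M[R]_n.
Hypotheses (sM : Defs.symmetric M) (pM : forall z, 0 <= bil M z z).

Lemma bil_cauchy_schwarz_sqr x y : bil M x y ^+ 2 <= bil M x x * bil M y y.
Proof.
apply: discriminant_le => // t.
have := pM (x + t *: y).
rewrite !bilDl !bilDr !bilZl !bilZr (bilC y x sM).
suff -> : bil M x x + t * bil M x y + (t * bil M x y + t * (t * bil M y y))
 = bil M x x + 2 * t * bil M x y + t ^+ 2 * bil M y y by [].
by ring.
Qed.

Lemma bil_cauchy_schwarz x y :
  bil M x y <= Num.sqrt (bil M x x) * Num.sqrt (bil M y y).
Proof.
rewrite -sqrtrM ?pM //; apply: (le_trans (ler_norm _)).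
by rewrite -sqrtr_sqr; apply: ler_wsqrtr; exact: bil_cauchy_schwarz_sqr.
Qed.

End SemiDefinite.

End BilinearForm.

Section EuclideanNorm.
Variables (R : realType) (n : nat).
Implicit Types (x y : 'cV[R]_n).

Lemma dotv_cauchy_schwarz x y : dotv x y <= norm2 x * norm2 y.
Proof.
rewrite /norm2 !dotvE; apply: bil_cauchy_schwarz; first exact: symmetric1.
by move=> z; rewrite -dotvE dotv_ge0.
Qed.

Lemma dotvZZ a x : dotv (a *: x) (a *: x) = a ^+ 2 * dotv x x.
Proof. by rewrite !dotvE bilZl bilZr mulrA -expr2. Qed.

Lemma norm2Z a x : norm2 (a *: x) = `|a| * norm2 x.
Proof. by rewrite /norm2 dotvZZ sqrtrM ?sqr_ge0 // sqrtr_sqr. Qed.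

Lemma norm20 : norm2 (0 : 'cV[R]_n) = 0.
Proof. by rewrite -(scale0r 0) norm2Z normr0 mul0r. Qed.

Lemma dotv_eq0 x : dotv x x = 0 -> x = 0.
Proof.
move=> /eqP; rewrite /dotv psumr_eq0 => [/allP H|i _]; last first.
  by rewrite -expr2 sqr_ge0.
apply/matrixP => i j; rewrite (ord1 j) !mxE.
have /H : i \in index_enum 'I_n by rewrite mem_index_enum.
by rewrite /= mulf_eq0 orbb => /eqP.
Qed.

Lemma norm2_gt0 x : x != 0 -> 0 < norm2 x.
Proof.
move=> xn0; rewrite lt_neqAle norm2_ge0 andbT eq_sym.
apply/negP => /eqP h; move/negP: xn0; apply; apply/eqP; apply: dotv_eq0.
by rewrite -norm2_sqr h expr0n.
Qed.

Lemma norm2_normalize x : x != 0 -> norm2 ((norm2 x)^-1 *: x) = 1.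
Proof.
move=> xn0; rewrite norm2Z ger0_norm ?invr_ge0 ?norm2_ge0 //.
by rewrite mulVf // gt_eqF // norm2_gt0.
Qed.

Lemma coord_le1 (u : 'cV[R]_n) i : norm2 u = 1 -> `|u i 0| <= 1.
Proof.
move=> nu; have : u i 0 ^+ 2 <= 1.
  rewrite -(expr1n R 2) -nu norm2_sqr /dotv (bigD1 i) //= -expr2 lerDl.
  by apply: sumr_ge0 => j _; rewrite -expr2 sqr_ge0.
by move=> h; rewrite -sqrtr_sqr -sqrtr1; apply: ler_wsqrtr.
Qed.

End EuclideanNorm.

Section SingularValues.
Variables (R : realType) (n : nat).
Implicit Types (M : 'M[R]_n) (u x : 'cV[R]_n).

Let sigma_set M := [set norm2 (M *m u) | u in [set u : 'cV[R]_n | norm2 u = 1]].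

Lemma sigma_set_has_ubound M : has_ubound (sigma_set M).
Proof.
pose K i := \sum_j `|M i j|.
exists (Num.sqrt (\sum_i K i ^+ 2)) => _ [u /= nu <-].
apply: ler_wsqrtr; rewrite /dotv; apply: ler_sum => i _.
have Ki : `|(M *m u) i 0| <= K i.
  rewrite mxE; apply: (le_trans (ler_norm_sum _ _ _)); apply: ler_sum => j _.
  by rewrite normrM ler_piMr // coord_le1.
rewrite -expr2 -real_normK ?num_real //; apply: lerXn2r => //.
by rewrite nnegrE; apply: le_trans Ki.
Qed.

Lemma sigma_set_eq0 M : ~ (exists u, norm2 u = 1) -> sigma_set M = set0.
Proof. by move=> nex; apply/seteqP; split => // _ [u /= nu _]; apply: nex; exists u. Qed.

Lemma sigma_max_unit M u : norm2 u = 1 -> norm2 (M *m u) <= sigma_max M.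
Proof. by move=> nu; apply: ub_le_sup; [exact: sigma_set_has_ubound | exists u]. Qed.

Lemma sigma_max_ge0 M : 0 <= sigma_max M.
Proof.
case: (pselect (exists u, norm2 u = 1)) => [[u nu]|nex].
  exact: le_trans (norm2_ge0 (M *m u)) (sigma_max_unit M nu).
by rewrite /sigma_max -/(sigma_set M) sigma_set_eq0 // sup0.
Qed.

Lemma norm2_mulmx_le M u : norm2 (M *m u) <= sigma_max M * norm2 u.
Proof.
have [->|un0] := eqVneq u 0; first by rewrite mulmx0 norm20 mulr0.
have := sigma_max_unit M (norm2_normalize un0).
rewrite -scalemxAr norm2Z ger0_norm ?invr_ge0 ?norm2_ge0 //.
by rewrite ler_pdivrMl ?norm2_gt0 // mulrC.
Qed.

Lemma sigma_max_le M l : 0 <= l ->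
  (forall u, norm2 u = 1 -> norm2 (M *m u) <= l) -> sigma_max M <= l.
Proof.
move=> l0 H; case: (pselect (exists u, norm2 u = 1)) => [[u nu]|nex].
  by apply: ge_sup; [exists (norm2 (M *m u)); exists u | move=> _ [w /= wn <-]; apply: H].
by rewrite /sigma_max -/(sigma_set M) sigma_set_eq0 // sup0.
Qed.

Lemma sigma_min_ge0 M : 0 <= sigma_min M.
Proof.
case: (pselect (exists u, norm2 u = 1)) => [[u nu]|nex].
  apply: lb_le_inf; first by exists (norm2 (M *m u)); exists u.
  by move=> _ [w /= wn <-]; apply: norm2_ge0.
by rewrite /sigma_min -/(sigma_set M) sigma_set_eq0 // inf0.
Qed.

Lemma sigma_min_le_norm2_mulmx M u : sigma_min M * norm2 u <= norm2 (M *m u).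
Proof.
have [->|un0] := eqVneq u 0; first by rewrite mulmx0 norm20 mulr0.
have : sigma_min M <= norm2 (M *m ((norm2 u)^-1 *: u)).
  apply: ge_inf; last by exists ((norm2 u)^-1 *: u) => //; exact: norm2_normalize.
  by exists 0 => _ [w /= wn <-]; apply: norm2_ge0.
rewrite -scalemxAr norm2Z ger0_norm ?invr_ge0 ?norm2_ge0 //.
by rewrite ler_pdivlMl ?norm2_gt0 // mulrC.
Qed.

Lemma bil_le_sigma_max M x : bil M x x <= sigma_max M * dotv x x.
Proof.
rewrite bil_dotv; apply: le_trans (dotv_cauchy_schwarz _ _) _.
apply: le_trans (ler_wpM2l (norm2_ge0 x) (norm2_mulmx_le M x)) _.
by rewrite -norm2_sqr expr2 mulrCA.
Qed.

Lemma sigma_min_le_sqr M x : bil M x x = 1 -> sigma_min M <= norm2 (M *m x) ^+ 2.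
Proof.
move=> xx; have Mx0 := norm2_ge0 (M *m x).
have h1 : 1 <= norm2 x * norm2 (M *m x).
  by rewrite -xx bil_dotv; apply: dotv_cauchy_schwarz.
rewrite -[sigma_min M]mulr1; apply: le_trans (ler_wpM2l (sigma_min_ge0 M) h1) _.
by rewrite mulrA expr2 ler_wpM2r // sigma_min_le_norm2_mulmx.
Qed.

Lemma sigma_ratio_mul_le M x : bil M x x = 1 ->
  Num.sqrt (sigma_min M) / sigma_max M * sigma_max M <= norm2 (M *m x).
Proof.
move=> xx; have [->|S0] := eqVneq (sigma_max M) 0; first by rewrite mulr0 norm2_ge0.
rewrite divfK // -(ger0_norm (norm2_ge0 (M *m x))) -sqrtr_sqr.
by apply: ler_wsqrtr; exact: sigma_min_le_sqr.
Qed.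

Lemma sigma_max_le_of_bil M l : Defs.symmetric M -> (forall x, 0 <= bil M x x) ->
  (forall x, bil M x x <= l * dotv x x) -> 0 <= l -> sigma_max M <= l.
Proof.
move=> sM pM hM l0; apply: sigma_max_le => // u nu; set w := M *m u.
have h1 : dotv w w <= Num.sqrt (bil M u u) * Num.sqrt (bil M w w).
  by rewrite -(bil_dotvl u w sM); apply: bil_cauchy_schwarz.
have h2 : Num.sqrt (bil M u u) * Num.sqrt (bil M w w) <= l * norm2 w.
  rewrite -sqrtrM ?pM // -[l]ger0_norm // -sqrtr_sqr -sqrtrM ?sqr_ge0 //.
  apply: ler_wsqrtr; rewrite expr2 -mulrA; apply: ler_pM; rewrite ?pM //.
  by have := hM u; rewrite -norm2_sqr nu expr1n mulr1.
have : norm2 w ^+ 2 <= l * norm2 w by rewrite norm2_sqr; apply: le_trans h2.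
have [->|wn0] := eqVneq (norm2 w) 0; first by [].
by rewrite expr2 ler_pM2r // lt_neqAle eq_sym wn0 norm2_ge0.
Qed.

End SingularValues.

Section Gradients.
Variables (R : realType) (n : nat).
Implicit Types (x e : 'cV[R]_n).

Definition quadp (a b c : R) : {poly R} := a%:P + b *: 'X + c *: 'X^2.

Lemma quadpE a b c t : (quadp a b c).[t] = a + b * t + c * t ^+ 2.
Proof. by rewrite /quadp !hornerE. Qed.

Lemma quadp0 a b c : (quadp a b c).[0] = a.
Proof. by rewrite quadpE mulr0 expr0n /= mulr0 !addr0. Qed.

Lemma deriv_quadp0 a b c : (quadp a b c)^`().[0] = b.
Proof. by rewrite /quadp !derivD !derivZ derivC derivX derivXn /= !hornerE. Qed.

Lemma derive1_horner (p : {poly R}) : derive1 (horner p) 0 = p^`().[0].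
Proof. by rewrite derive1E; apply: derive_val. Qed.

Lemma dotv_delta x (i : 'I_n) : dotv x (delta_mx i 0) = x i 0.
Proof.
rewrite /dotv (bigD1 i) //= big1 ?addr0; first by rewrite mxE !eqxx mulr1.
by move=> j ji; rewrite mxE (negPf ji) mulr0.
Qed.

Variables (Q A : 'M[R]_n) (q v : 'cV[R]_n) (m : R).
Hypotheses (sQ : Defs.symmetric Q) (sA : Defs.symmetric A).

Lemma gcon_line x e t : gcon A v (x + t *: e) =
  (quadp (gcon A v x) (2 * bil A (x - v) e) (bil A e e)).[t].
Proof.
rewrite quadpE /gcon !qformE addrAC !bilDl !bilDr !bilZl !bilZr.
by rewrite (bilC e x sA) (bilC e (- v) sA); ring.
Qed.

Lemma fobj_line x e t : fobj Q q (x + t *: e) =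
  (quadp (fobj Q q x) (bil Q x e + dotv q e) (1/2 * bil Q e e)).[t].
Proof.
rewrite quadpE /fobj !qformE !bilDl !bilDr !bilZl !bilZr (bilC e x sQ).
by rewrite !dotvE bilDr bilZr; field.
Qed.

Definition Jk_grad (k : nat) x : 'cV[R]_n :=
  Q *m x + q + (m * gcon A v x ^+ k.-1 * 2) *: (A *m (x - v)).

Lemma grad_fobj x : grad (fobj Q q) x = Q *m x + q.
Proof.
apply/matrixP => i j; rewrite (ord1 j) [LHS]mxE.
under eq_fun do rewrite fobj_line.
by rewrite derive1_horner deriv_quadp0 (bil_dotvl _ _ sQ) !dotv_delta [RHS]mxE.
Qed.

Lemma grad_gcon x : grad (gcon A v) x = 2 *: (A *m (x - v)).
Proof.
apply/matrixP => i j; rewrite (ord1 j) [LHS]mxE.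
under eq_fun do rewrite gcon_line.
by rewrite derive1_horner deriv_quadp0 (bil_dotvl _ _ sA) dotv_delta [RHS]mxE.
Qed.

Lemma grad_Jk k x : (1 <= k)%N -> grad (Jk Q A q v m k) x = Jk_grad k x.
Proof.
move=> k1; apply/matrixP => i j; rewrite (ord1 j) [LHS]mxE.
set e := delta_mx i 0.
pose Pf := quadp (fobj Q q x) (bil Q x e + dotv q e) (1/2 * bil Q e e).
pose Pg := quadp (gcon A v x) (2 * bil A (x - v) e) (bil A e e).
have -> : (fun t => Jk Q A q v m k (x + t *: e)) = horner (Pf + (m / k%:R) *: Pg ^+ k).
  by apply/funext => t; rewrite /Jk fobj_line gcon_line !hornerE.
rewrite derive1_horner derivD derivZ deriv_exp !hornerE hornerMn hornerM horner_exp.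
rewrite !deriv_quadp0 quadp0 (bil_dotvl _ _ sQ) (bil_dotvl _ _ sA) !dotv_delta /Jk_grad.
move: (Q *m x) (A *m (x - v)) => Qx Ax; rewrite !mxE -mulr_natr.
by field; rewrite pnatr_eq0 -lt0n.
Qed.

End Gradients.

Section ScalarInequalities.
Variable R : realType.
Implicit Types a b c s t u D : R.

Lemma exprn_taylor2_le a u k : 0 <= a <= 1 -> 0 <= u <= 1 ->
  u ^+ k - a ^+ k - k%:R * a ^+ k.-1 * (u - a) <= (k * k.-1)%:R / 2 * (u - a) ^+ 2.
Proof.
move=> /andP[a0 a1] /andP[u0 u1]; elim: k => [|k IH].
  by rewrite !expr0 mul0n /=; lra.
have ak : a ^+ k.-1 <= 1 by apply: exprn_ile1.
have ak0 : 0 <= a ^+ k.-1 by apply: exprn_ge0.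
have -> : u ^+ k.+1 - a ^+ k.+1 - k.+1%:R * a ^+ k * (u - a) =
   u * (u ^+ k - a ^+ k - k%:R * a ^+ k.-1 * (u - a)) + k%:R * a ^+ k.-1 * (u - a) ^+ 2.
  case: k {IH ak ak0} => [|k] /=; first by rewrite !expr0 !expr1; ring.
  by rewrite !exprS /=; ring.
have -> : (k.+1 * k.+1.-1)%:R / 2 * (u - a) ^+ 2 =
   (k * k.-1)%:R / 2 * (u - a) ^+ 2 + k%:R * (u - a) ^+ 2.
  case: k {IH ak ak0} => [|k] /=; first by rewrite !mul0n !mul0r add0r.
  by field.
set D := (u ^+ k - a ^+ k - k%:R * a ^+ k.-1 * (u - a)) in IH *.
have sq0 : 0 <= (u - a) ^+ 2 by apply: sqr_ge0.
apply: lerD.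
  have [D0|D0] := lerP D 0.
    apply: le_trans (_ : 0 <= _); first by rewrite mulr_ge0_le0.
    by apply: mulr_ge0 => //; apply: divr_ge0.
  by apply: le_trans IH; rewrite -[X in _ <= X]mul1r ler_wpM2r // ltW.
by rewrite -mulrA ler_wpM2l // ler_piMl.
Qed.

Lemma natrM_pred k : (1 <= k)%N -> (k * k.-1)%:R = k%:R * (k%:R - 1) :> R.
Proof. by case: k => // k _; rewrite natrM /= -natr1 addrK mulrC. Qed.

Lemma exprn_increment_le a b c k : (1 <= k)%N -> 0 <= a <= 1 -> 0 <= a + b + c <= 1 ->
  0 <= c -> (b + c) ^+ 2 <= 4 * c ->
  (a + b + c) ^+ k - a ^+ k <= k%:R * a ^+ k.-1 * b + k%:R * (2 * k%:R - 1) * c.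
Proof.
move=> k1 ha hu c0 hbc.
have := exprn_taylor2_le k ha hu.
rewrite (_ : a + b + c - a = b + c); last by ring.
have ak : a ^+ k.-1 <= 1 by case/andP: ha => ??; apply: exprn_ile1.
have ak0 : 0 <= a ^+ k.-1 by case/andP: ha => ??; apply: exprn_ge0.
have H1 : (k * k.-1)%:R / 2 * (b + c) ^+ 2 <= (k * k.-1)%:R / 2 * (4 * c).
  by apply: ler_wpM2l => //; apply: divr_ge0.
have H2 : k%:R * a ^+ k.-1 * c <= k%:R * c by rewrite -mulrA ler_wpM2l // ler_piMl.
rewrite natrM_pred // in H1 *.
move: H1 H2; set K := k%:R; set P := a ^+ k.-1 => H1 H2 T.
have -> : K * (2 * K - 1) * c = K * (K - 1) / 2 * (4 * c) + K * c by field.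
have : K * P * (b + c) = K * P * b + K * P * c by ring.
lra.
Qed.

Lemma increment_sqr_le t s b : 0 <= t <= 1 -> 0 <= s ->
  b <= 2 * t * s -> - (2 * t * s) <= b -> 0 <= t ^+ 2 + b + s ^+ 2 <= 1 ->
  (b + s ^+ 2) ^+ 2 <= 4 * s ^+ 2.
Proof.
move=> /andP[t0 t1] s0 h1 h2 /andP[u0 u1].
have L : - (2 * s) <= b + s ^+ 2.
  have : 0 <= s * (1 - t) by apply: mulr_ge0 => //; lra.
  have : 0 <= s ^+ 2 by apply: sqr_ge0.
  nra.
have U : b + s ^+ 2 <= 2 * s.
  have [hs|hs] := lerP s (2 - 2 * t).
    have : s * s <= s * (2 - 2 * t) by apply: ler_wpM2l.
    rewrite expr2 in h1 *; nra.
  have : (1 - t) * (1 + t) <= (1 - t) * 2 by apply: ler_wpM2l; lra.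
  rewrite expr2 in u1 *; nra.
have : 0 <= (2 * s - (b + s ^+ 2)) * (2 * s + (b + s ^+ 2)) by apply: mulr_ge0; lra.
rewrite !expr2; nra.
Qed.

Lemma one_sub_exprn_le t N : 0 <= t <= 1 -> 1 - t ^+ N <= N%:R * (1 - t).
Proof.
move=> /andP[t0 t1]; elim: N => [|N IH]; first by rewrite expr0 subrr mul0r.
have tN : t ^+ N <= 1 by apply: exprn_ile1.
have tN0 : 0 <= t ^+ N by apply: exprn_ge0.
have : t ^+ N * (1 - t) <= 1 - t by rewrite ler_piMl // subr_ge0.
rewrite exprSr -natr1; nra.
Qed.

Lemma add_le1_of_exprn_gap t D j : (1 <= j)%N -> 0 <= t <= 1 ->
  (2 * j%:R) * D <= t * (1 - t ^+ (2 * j)) -> t + D <= 1.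
Proof.
move=> j1 ht hD.
have := one_sub_exprn_le (2 * j) ht; case/andP: ht => t0 t1.
have tp : t ^+ (2 * j) <= 1 by apply: exprn_ile1.
have : t * (1 - t ^+ (2 * j)) <= 1 - t ^+ (2 * j) by rewrite ler_piMl // subr_ge0.
have jp : 0 < j%:R :> R by rewrite ltr0n.
rewrite natrM => h2 h1.
have : (2 * j%:R) * D <= (2 * j%:R) * (1 - t) by lra.
rewrite ler_pM2l ?mulr_gt0 //; lra.
Qed.

End ScalarInequalities.

Section SteepestDescent.
Variables (R : realType) (n : nat).
Variables (Q A : 'M[R]_n) (q v : 'cV[R]_n) (m : R).
Hypotheses (pQ : psd Q) (pA : pd A) (m0 : 0 < m).
Implicit Types (x y z d e h u : 'cV[R]_n) (g : R).

Let sQ : Defs.symmetric Q := pQ.1.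
Let sA : Defs.symmetric A := pA.1.

Lemma bilQ_ge0 z : 0 <= bil Q z z.
Proof. by rewrite -qformE; apply: pQ.2. Qed.

Lemma bilA_ge0 z : 0 <= bil A z z.
Proof.
have [->|zn0] := eqVneq z 0; first by rewrite bil0l.
by apply: ltW; rewrite -qformE; apply: pA.2.
Qed.

Lemma bilA_gt0 z : z != 0 -> 0 < bil A z z.
Proof. by rewrite -qformE; apply: pA.2. Qed.

Lemma bilA_normalize z : z != 0 ->
  bil A ((Num.sqrt (bil A z z))^-1 *: z) ((Num.sqrt (bil A z z))^-1 *: z) = 1.
Proof.
move=> zn0; rewrite bilZl bilZr mulrA -expr2 exprVn sqr_sqrtr ?bilA_ge0 //.
by rewrite mulVf // gt_eqF // bilA_gt0.
Qed.

Lemma bilA_convex a b al : 0 <= al <= 1 -> bil A a a <= 1 -> bil A b b <= 1 ->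
  bil A (al *: a + (1 - al) *: b) (al *: a + (1 - al) *: b) <= 1.
Proof.
move=> /andP[al0 al1] ha hb.
have hab := bilA_ge0 (a - b).
rewrite !bilBl !bilBr (bilC b a sA) in hab.
rewrite !bilDl !bilDr !bilZl !bilZr (bilC b a sA).
have : 0 <= al * (1 - al) by apply: mulr_ge0; lra.
nra.
Qed.

Definition QA c : 'M[R]_n := Q + c *: A.

Lemma QA_sym c : Defs.symmetric (QA c).
Proof. by rewrite /Defs.symmetric /QA linearD /= linearZ /= sQ sA. Qed.

Lemma bil_QA c z : bil (QA c) z z = bil Q z z + c * bil A z z.
Proof. by rewrite /QA bilMD bilMZ. Qed.

Lemma LkE k : Lk Q A m k = sigma_max (QA (m * (4 * k%:R - 2))).
Proof. by []. Qed.

Lemma Lk_coef_ge0 k : (1 <= k)%N -> 0 <= m * (4 * k%:R - 2).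
Proof.
move=> k1; apply: mulr_ge0; first exact: ltW.
have : 1 <= k%:R :> R by rewrite ler1n.
lra.
Qed.

Lemma Lk1_le k : (1 <= k)%N -> Lk Q A m 1 <= Lk Q A m k.
Proof.
move=> k1; have c1 := Lk_coef_ge0 (leqnn 1).
rewrite LkE; apply: sigma_max_le_of_bil; rewrite ?sigma_max_ge0 //.
- exact: QA_sym.
- by move=> z; rewrite bil_QA addr_ge0 ?bilQ_ge0 // mulr_ge0 ?bilA_ge0.
move=> z; apply: le_trans (bil_le_sigma_max _ z); rewrite !bil_QA lerD2l.
apply: ler_wpM2r; first exact: bilA_ge0.
apply: ler_wpM2l; first exact: ltW.
have : 1 <= k%:R :> R by rewrite ler1n.
lra.
Qed.

Lemma step_mul_Lk_le1 k g : 0 < g -> g <= 1 / Lk Q A m k -> g * Lk Q A m k <= 1.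
Proof.
move=> g0 gL; have := sigma_max_ge0 (QA (m * (4 * k%:R - 2))); rewrite -LkE.
rewrite le_eqVlt => /orP[/eqP L0|Lpos]; last by rewrite -ler_pdivlMr // mul1r.
by move: gL; rewrite -L0 invr0 mulr0 => /(lt_le_trans g0); rewrite ltxx.
Qed.

Lemma step_bil_QA_le k g z : 0 < g -> g <= 1 / Lk Q A m k ->
  g * bil (QA (m * (4 * k%:R - 2))) z z <= dotv z z.
Proof.
move=> g0 gL; apply: (le_trans (ler_wpM2l (ltW g0) (bil_le_sigma_max _ _))).
rewrite -LkE mulrA -[X in _ <= X]mul1r ler_wpM2r ?dotv_ge0 //.
exact: step_mul_Lk_le1.
Qed.

Lemma bilA_eq0 z : bil A z z = 0 -> z = 0.
Proof. by move=> h; apply/eqP/negPn/negP => /bilA_gt0; rewrite h ltxx. Qed.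

Lemma unitmx_of_bil_ge (B : 'M[R]_n) c : Defs.symmetric B -> 0 < c ->
  (forall u, c * bil A u u <= bil B u u) -> B \in unitmx.
Proof.
move=> sB c0 hB; rewrite -row_free_unit; apply: inj_row_free => r rB.
have Br : B *m r^T = 0 by rewrite -{1}sB -trmx_mul rB trmx0.
have := hB r^T; rewrite (bil_dotv B) Br -(scale0r 0) dotvZr mul0r pmulr_rle0 // => hr.
have : bil A r^T r^T = 0 by apply/eqP; rewrite eq_le hr bilA_ge0.
by move/bilA_eq0/(congr1 trmx); rewrite trmxK trmx0.
Qed.

Lemma bilA_add_le1 d e : Num.sqrt (bil A d d) + Num.sqrt (bil A e e) <= 1 ->
  bil A (d + e) (d + e) <= 1.
Proof.
move=> h; have hde := bil_cauchy_schwarz sA bilA_ge0 d e.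
rewrite !bilDl !bilDr (bilC e d sA).
rewrite -[bil A d d]sqr_sqrtr ?bilA_ge0 // -[bil A e e]sqr_sqrtr ?bilA_ge0 //.
move: h hde (sqrtr_ge0 (bil A d d)) (sqrtr_ge0 (bil A e e)).
set a := Num.sqrt _; set b := Num.sqrt _ => h hde a0 b0; nra.
Qed.

Lemma wfunE z : wfun Q A q v m (v + z) = Q *m (v + z) + q + (2 * m) *: (A *m z).
Proof.
rewrite /wfun grad_fobj // grad_gcon // scalerA mulrC.
by rewrite [v + z]addrC addrK.
Qed.

(* The gradient step for J_1, in coordinates centred at v. *)
Definition step1 g z := z - g *: wfun Q A q v m (v + z).

Lemma step1_affine g rho e : step1 g (rho *: e) =
  ((1 + rho) / 2) *: step1 g e + (1 - (1 + rho) / 2) *: step1 g (- e).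
Proof.
rewrite /step1 !wfunE !mulmxDr !mulmxN -!scalemxAr.
move: (Q *m v) (Q *m e) (A *m e) => a1 a2 a3.
by apply/matrixP => i j; rewrite !mxE; field.
Qed.

Lemma ellipsoid_decomp z : bil A z z <= 1 ->
  (forall u : 'cV[R]_n, u = 0) \/
  exists rho e, [/\ z = rho *: e, bil A e e = 1 & `|rho| <= 1].
Proof.
move=> hz; case: (pselect (exists u : 'cV[R]_n, u != 0)) => [[u un0]|nex]; last first.
  by left=> u; apply/eqP/negPn/negP => un0; apply: nex; exists u.
right; have [->|zn0] := eqVneq z 0.
  by exists 0, ((Num.sqrt (bil A u u))^-1 *: u); rewrite scale0r normr0 bilA_normalize.
exists (Num.sqrt (bil A z z)), ((Num.sqrt (bil A z z))^-1 *: z); split.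
- by rewrite scalerA divff ?scale1r // gt_eqF // sqrtr_gt0; exact: bilA_gt0.
- exact: bilA_normalize.
- by rewrite ger0_norm ?sqrtr_ge0 // -sqrtr1 ler_wsqrtr.
Qed.

Definition step1_mx g : 'M[R]_n := 1%:M - g *: QA (2 * m).

Lemma step1_mx_sym g : Defs.symmetric (step1_mx g).
Proof. by rewrite /Defs.symmetric /step1_mx linearB /= trmx1 linearZ /= QA_sym. Qed.

Lemma step1E g z : step1 g z = step1_mx g *m z - g *: (Q *m v + q).
Proof.
rewrite /step1 wfunE /step1_mx /QA mulmxBl mul1mx -scalemxAl mulmxDl -scalemxAl !mulmxDr.
move: (Q *m v) (Q *m z) (A *m z) => a1 a2 a3.
by apply/matrixP => i j; rewrite !mxE; ring.
Qed.

Lemma Jk_stepE k g x : x - g *: Jk_grad Q A q v m k x - v =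
  step1_mx g *m (x - v) + (2 * g * m * (1 - gcon A v x ^+ k.-1)) *: (A *m (x - v))
    - g *: (Q *m v + q).
Proof.
set d := x - v; set mu := gcon A v x ^+ k.-1.
have xE : x = v + d by rewrite /d addrC subrK.
rewrite /Jk_grad -/d -/mu /step1_mx /QA mulmxBl mul1mx -scalemxAl mulmxDl -scalemxAl.
rewrite [in LHS]xE mulmxDr.
move: (Q *m v) (Q *m d) (A *m d) => a1 a2 a3.
by apply/matrixP => i j; rewrite !mxE; ring.
Qed.

Lemma step1_mx_ge k g u : 0 < g -> g <= 1 / Lk Q A m k ->
  g * (m * (4 * k%:R - 4)) * bil A u u <= bil (step1_mx g) u u.
Proof.
move=> g0 gL; have := step_bil_QA_le u g0 gL.
rewrite bil_QA /step1_mx bilMD bilMN bilMZ bil_QA -dotvE.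
have := bilA_ge0 u; have := bilQ_ge0 u; nra.
Qed.

Lemma sqrt_bilA_solution_le (B : 'M[R]_n) c beta d e : 0 <= beta ->
  c * bil A e e <= bil B e e -> B *m e = beta *: (A *m d) ->
  c * Num.sqrt (bil A e e) <= beta * Num.sqrt (bil A d d).
Proof.
move=> b0 hB Be.
have cs := bil_cauchy_schwarz sA bilA_ge0 e d.
set D := Num.sqrt (bil A e e) in cs *; set t := Num.sqrt (bil A d d) in cs *.
have D0 : 0 <= D by apply: sqrtr_ge0.
have h : c * D ^+ 2 <= beta * (D * t).
  rewrite sqr_sqrtr ?bilA_ge0 //; apply: le_trans hB _.
  by rewrite bil_dotv Be dotvZr -bil_dotv; apply: ler_wpM2l.
have [D00|Dn0] := eqVneq D 0; first by rewrite D00 mulr0 mulr_ge0 ?sqrtr_ge0.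
have Dpos : 0 < D by rewrite lt_neqAle eq_sym Dn0 D0.
by rewrite -(ler_pM2r Dpos); move: h; rewrite expr2; lra.
Qed.

Lemma Jk_step_as_step1 k g x : (1 < k)%N -> 0 < g -> g <= 1 / Lk Q A m k ->
  gcon A v x <= 1 ->
  exists2 z, bil A z z <= 1 & step1 g z = x - g *: Jk_grad Q A q v m k x - v.
Proof.
move=> k2 g0 gL hx; set d := x - v; set t := Num.sqrt (bil A d d); set j := k.-1.
have kj : k = j.+1 by rewrite /j prednK // ltnW.
have j1 : (1 <= j)%N by rewrite -ltnS -kj.
have t0 : 0 <= t by apply: sqrtr_ge0.
have t1 : t <= 1 by rewrite -sqrtr1 ler_wsqrtr.
have muE : gcon A v x ^+ k.-1 = t ^+ (2 * j) by rewrite exprM sqr_sqrtr ?bilA_ge0.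
set beta := 2 * g * m * (1 - t ^+ (2 * j)).
have beta0 : 0 <= beta.
  apply: mulr_ge0; last by rewrite subr_ge0 exprn_ile1.
  by rewrite !mulr_ge0 ?(ltW g0) ?(ltW m0).
have kR : 2 <= k%:R :> R by rewrite ler_nat.
have cpos : 0 < g * (m * (4 * k%:R - 4)) by rewrite !mulr_gt0 //; lra.
have hB u := step1_mx_ge u g0 gL.
set dl := invmx (step1_mx g) *m (beta *: (A *m d)).
have Bdl : step1_mx g *m dl = beta *: (A *m d).
  by rewrite mulKVmx // (unitmx_of_bil_ge (step1_mx_sym g) cpos hB).
exists (d + dl); last by rewrite step1E mulmxDr Bdl Jk_stepE muE.
apply: bilA_add_le1.
apply: (add_le1_of_exprn_gap j1); first by rewrite t0 t1.
have gm : 0 < 2 * g * m by rewrite !mulr_gt0.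
rewrite -(ler_pM2l gm); have := sqrt_bilA_solution_le beta0 (hB dl) Bdl.
have -> : k%:R = j%:R + 1 :> R by rewrite kj -natr1.
rewrite /beta; lra.
Qed.

Section Requirement2.
Hypothesis req : requirement2 Q A q v m.

(* Requirement 2 at the boundary point v + e, where grad g = 2 A e. *)
Lemma requirement2_boundary g e : 0 <= g -> g * Lk Q A m 1 <= 1 -> bil A e e = 1 ->
  g * bil A (wfun Q A q v m (v + e)) (wfun Q A q v m (v + e))
    <= 2 * bil A e (wfun Q A q v m (v + e)).
Proof.
move=> g0 gL ee; set w := wfun _ _ _ _ _ _.
have ve : v + e - v = e by rewrite [v + e]addrC addrK.
have ge : gcon A v (v + e) = 1 by rewrite /gcon qformE ve.
have := req ge; rewrite grad_gcon // ve -/w norm2Z ger0_norm // norm2_sqr dotvZr.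
rewrite (dotvC w) -(bil_dotvl _ _ sA) => H.
have [->|wn0] := eqVneq w 0; first by rewrite bil0l bil0r !mulr0.
have Ae0 : A *m e != 0.
  apply/eqP => Ae0; move: ee; rewrite bil_dotv Ae0 dotvC dotv0l => /eqP.
  by rewrite eq_sym oner_eq0.
have nAe := norm2_gt0 Ae0.
have nw : 0 < dotv w w by rewrite -norm2_sqr exprn_gt0 ?norm2_gt0.
have S0 : 0 <= sigma_max A by apply: sigma_max_ge0.
have L10 : 0 <= Lk Q A m 1 by apply: sigma_max_ge0.
have r0 : 0 <= rA A by rewrite divr_ge0 ?sqrtr_ge0.
have LD : 0 < Lk Q A m 1 * (2 * bil A e w).
  have : 0 < dotv w w * (2 * norm2 (A *m e)) by rewrite !mulr_gt0.
  nra.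
have D0 : 0 <= bil A e w by nra.
have rS : rA A * sigma_max A <= norm2 (A *m e) := sigma_ratio_mul_le ee.
have hS : sigma_max A * dotv w w <= Lk Q A m 1 * (2 * bil A e w).
  rewrite -(ler_pM2r (_ : 0 < 2 * norm2 (A *m e))); last by rewrite mulr_gt0.
  have := ler_wpM2l S0 H; have := ler_wpM2r (ltW LD) rS; lra.
apply: le_trans (ler_wpM2l g0 (bil_le_sigma_max A w)) _.
apply: le_trans (ler_wpM2l g0 hS) _.
nra.
Qed.

Lemma step1_boundary_le1 g e : 0 <= g -> g * Lk Q A m 1 <= 1 -> bil A e e = 1 ->
  bil A (step1 g e) (step1 g e) <= 1.
Proof.
move=> g0 gL ee; have := requirement2_boundary g0 gL ee; rewrite /step1.
set w := wfun _ _ _ _ _ _ => hw.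
rewrite !bilBl !bilBr !bilZl !bilZr ee (bilC w e sA).
have := ler_wpM2l g0 hw; lra.
Qed.

Lemma step1_ellipsoid_le1 g z : 0 <= g -> g * Lk Q A m 1 <= 1 -> bil A z z <= 1 ->
  bil A (step1 g z) (step1 g z) <= 1.
Proof.
move=> g0 gL /ellipsoid_decomp [triv|[rho [e [-> ee rho1]]]].
  by rewrite (triv (step1 g z)) bil0l.
rewrite step1_affine; apply: bilA_convex.
- by move: rho1; rewrite ler_norml => /andP[? ?]; apply/andP; split; lra.
- exact: step1_boundary_le1.
- by apply: step1_boundary_le1; rewrite ?bilNl ?bilNr ?opprK.
Qed.

Lemma Jk_step_feasible k g x : (1 <= k)%N -> 0 < g -> g <= 1 / Lk Q A m k ->
  gcon A v x <= 1 -> gcon A v (x - g *: Jk_grad Q A q v m k x) <= 1.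
Proof.
move=> k1 g0 gL hx.
have gL1 : g * Lk Q A m 1 <= 1.
  apply: le_trans (step_mul_Lk_le1 g0 gL); apply: ler_wpM2l; [exact: ltW | exact: Lk1_le].
have [z hz zE] : exists2 z, bil A z z <= 1 &
    step1 g z = x - g *: Jk_grad Q A q v m k x - v.
  have [k2|k1e] := ltnP 1 k; first exact: Jk_step_as_step1.
  have -> : k = 1%N by apply/eqP; rewrite eqn_leq k1e k1.
  exists (x - v) => //.
  by rewrite step1E Jk_stepE expr0 subrr mulr0 scale0r addr0.
by rewrite /gcon qformE -zE; apply: step1_ellipsoid_le1 => //; exact: ltW.
Qed.

End Requirement2.


Lemma Jk_succ_le k x : (1 <= k)%N -> gcon A v x <= 1 ->
  Jk Q A q v m k.+1 x <= Jk Q A q v m k x.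
Proof.
move=> k1 hx; rewrite /Jk lerD2l.
have a0 : 0 <= gcon A v x by apply: bilA_ge0.
have hpow : gcon A v x ^+ k.+1 <= gcon A v x ^+ k by rewrite exprSr ler_piMr ?exprn_ge0.
have hinv : (k.+1%:R)^-1 <= k%:R^-1 :> R by rewrite lef_pV2 ?posrE ?ltr0n // ler_nat.
apply: ler_pM => //; rewrite ?exprn_ge0 //.
- by apply: divr_ge0 => //; exact: ltW.
- by apply: ler_wpM2l => //; exact: ltW.
Qed.

Lemma bilA_increment_sqr_le d h : bil A d d <= 1 -> bil A (d + h) (d + h) <= 1 ->
  (2 * bil A d h + bil A h h) ^+ 2 <= 4 * bil A h h.
Proof.
move=> hd hdh.
have E : bil A (d + h) (d + h) = bil A d d + 2 * bil A d h + bil A h h.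
  by rewrite !bilDl !bilDr (bilC h d sA); ring.
have cs := bil_cauchy_schwarz sA bilA_ge0 d h.
have csN := bil_cauchy_schwarz sA bilA_ge0 d (- h).
rewrite bilNr bilNl bilNr opprK in csN.
have := increment_sqr_le (t := Num.sqrt (bil A d d)) (s := Num.sqrt (bil A h h))
  (b := 2 * bil A d h).
rewrite !sqr_sqrtr ?bilA_ge0 //; apply.
- by rewrite sqrtr_ge0 -sqrtr1 ler_wsqrtr.
- exact: sqrtr_ge0.
- lra.
- lra.
- by rewrite -E bilA_ge0 hdh.
Qed.

Lemma penalty_increment_le k x h : (1 <= k)%N -> gcon A v x <= 1 ->
  gcon A v (x + h) <= 1 ->
  m / k%:R * (gcon A v (x + h) ^+ k - gcon A v x ^+ k)
    <= m * gcon A v x ^+ k.-1 * (2 * bil A (x - v) h) + m * (2 * k%:R - 1) * bil A h h.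
Proof.
move=> k1 hx hy.
have hbc : (2 * bil A (x - v) h + bil A h h) ^+ 2 <= 4 * bil A h h.
  by apply: bilA_increment_sqr_le hx _; rewrite addrAC; exact: hy.
move: hy (bilA_ge0 (x + h - v) : 0 <= gcon A v (x + h)).
rewrite -[h in gcon _ _ (_ + h)]scale1r gcon_line // quadpE mulr1 expr1n mulr1.
set a := gcon A v x; set b := 2 * bil A (x - v) h; set c := bil A h h => hy u0.
have a0 : 0 <= a by apply: bilA_ge0.
have pb := exprn_increment_le k1 (introT andP (conj a0 hx)) (introT andP (conj u0 hy))
  (bilA_ge0 h) hbc.
have mk0 : 0 <= m / k%:R by apply: divr_ge0 => //; exact: ltW.
rewrite (_ : m * a ^+ k.-1 * b + m * (2 * k%:R - 1) * c =
  m / k%:R * (k%:R * a ^+ k.-1 * b + k%:R * (2 * k%:R - 1) * c)).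
  by apply: ler_wpM2l.
by field; rewrite pnatr_eq0 -lt0n.
Qed.

Lemma Jk_step_le k g x : (1 <= k)%N -> 0 < g -> g <= 1 / Lk Q A m k ->
  gcon A v x <= 1 -> gcon A v (x - g *: Jk_grad Q A q v m k x) <= 1 ->
  Jk Q A q v m k (x - g *: Jk_grad Q A q v m k x) <= Jk Q A q v m k x.
Proof.
move=> k1 g0 gL hx; set p := Jk_grad _ _ _ _ _ k x.
rewrite -scaleNr; set h := (- g) *: p => hy.
have pen := penalty_increment_le k1 hx hy.
have fE : fobj Q q (x + h) = fobj Q q x + (bil Q x h + dotv q h) + 1/2 * bil Q h h.
  by rewrite -[h in LHS]scale1r fobj_line // quadpE mulr1 expr1n mulr1.
have ph : dotv p h =
    bil Q x h + dotv q h + m * gcon A v x ^+ k.-1 * (2 * bil A (x - v) h).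
  by rewrite /p /Jk_grad !dotvDl dotvZl -(bil_dotvl _ _ sQ) -(bil_dotvl _ _ sA); ring.
have ph' : dotv p h = - g * dotv p p by rewrite /h dotvZr.
have hh : bil Q h h + m * (4 * k%:R - 2) * bil A h h =
    g ^+ 2 * bil (QA (m * (4 * k%:R - 2))) p p.
  by rewrite bil_QA /h !bilZl !bilZr; ring.
have gp := ler_wpM2l (ltW g0) (step_bil_QA_le p g0 gL).
have pp0 : 0 <= g * dotv p p by rewrite mulr_ge0 ?dotv_ge0 ?ltW.
rewrite /Jk fE; lra.
Qed.

End SteepestDescent.

Theorem lemma4 (R : realType) (n : nat) (Q A : 'M[R]_n) (q v : 'cV[R]_n) (m : R)
  (x : nat -> 'cV[R]_n) (gamma : nat -> R) :
  psd Q -> pd A -> 0 < m -> requirement2 Q A q v m ->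
  gcon A v (x 1%N) <= 1 ->
  (forall k, (1 <= k)%N -> x k.+1 = x k - gamma k *: grad (Jk Q A q v m k) (x k)) ->
  (forall k, (1 <= k)%N -> 0 < gamma k /\ gamma k <= 1 / Lk Q A m k) ->
  cvgn (fun N => \sum_(1 <= k < N) gamma k ^+ 2) ->
  (fun N => \sum_(1 <= k < N) gamma k) @ \oo --> +oo ->
  forall k, (1 <= k)%N ->
    [/\ Jk Q A q v m k.+1 (x k.+1) <= Jk Q A q v m k (x k.+1),
        Jk Q A q v m k (x k.+1) <= Jk Q A q v m k (x k)
      & Jk Q A q v m k.+1 (x k.+1) <= Jk Q A q v m k (x k)].
Proof.
move=> pQ pA m0 req hx1 hstep hgamma _ _ k k1.
have sQ := pQ.1; have sA := pA.1.
have step j : (1 <= j)%N -> x j.+1 = x j - gamma j *: Jk_grad Q A q v m j (x j).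
  by move=> j1; rewrite hstep // grad_Jk.
have feasible j : (1 <= j)%N -> gcon A v (x j) <= 1.
  elim: j => [//|[_ _|j IH _]]; first exact: hx1.
  have [g0 gL] := hgamma j.+1 isT.
  by rewrite step //; apply: Jk_step_feasible => //; exact: IH.
have [g0 gL] := hgamma k k1.
have h1 : Jk Q A q v m k.+1 (x k.+1) <= Jk Q A q v m k (x k.+1).
  by apply: Jk_succ_le => //; exact: feasible.
have h2 : Jk Q A q v m k (x k.+1) <= Jk Q A q v m k (x k).
  rewrite step //; apply: Jk_step_le => //; first exact: feasible.
  by rewrite -step //; exact: feasible.
by split => //; apply: le_trans h1 h2.
Qed.
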